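(* Let $\phi\colon F_1\to F_2$ and $\psi\colon F_2\to F_3$ be transformations as below, dinatural in all their variables, and let $P,T$ be the places and transitions of $\Gamma(\psi)\circ\Gamma(\phi)$. Let $(M,L,f)$ be a labelled marking with $f\colon A\to B$, and let $t\in T$ be a transition with $M(p)=1$ for all $p\in{}^\bullet t$ and $L(t)=B$. Define $M'\colon P\to\{0,1\}$ by $M'(p)=0$ if $p\in{}^\bullet t$, $M'(p)=1$ if $p\in t^\bullet$, $M'(p)=M(p)$ otherwise, and $L'\colon T\to\{A,B\}$ by $L'(t)=A$, $L'(s)=L(s)$ for $s\ne t$. Then $(M',L',f)$ is a labelled marking and $\mathrm{mor}(M,L,f)=\mathrm{mor}(M',L',f)$.
   Context: Notation: for $k\in\mathbb N$, $k$ also denotes $\{1,\dots,k\}$; $\mathbb B^\alpha=\mathbb B^{\alpha_1}\times\cdots$ with $\mathbb B^+=\mathbb B$, $\mathbb B^-=\mathbb B^{op}$; for $\mathbf A=(A_1,\dots,A_n)$ and $\sigma\colon k\to n$, $\mathbf A\sigma=(A_{\sigma1},\dots,A_{\sigma k})$; a morphism $f\colon A\to B$ in a contravariant argument is regarded as $B\to A$ in $\mathbb B^{op}$. A transformation $\phi\colon F\to G$ ($F\colon\mathbb B^\alpha\to\mathbb C$, $G\colon\mathbb B^\beta\to\mathbb C$) of type $|\alpha|\xrightarrow{\sigma}n\xleftarrow{\tau}|\beta|$ is a family $\phi_{\mathbf A}\colon F(\mathbf A\sigma)\to G(\mathbf A\tau)$, $\mathbf A\in\mathrm{Ob}(\mathbb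 B)^n$. With $\mathbf A[X,Y/i]\sigma$ the tuple whose $j$-th entry is $X$ if $\sigma j=i,\alpha_j=-$, $Y$ if $\sigma j=i,\alpha_j=+$, and $A_{\sigma j}$ (or $1_{A_{\sigma j}}$ for morphisms) otherwise, and $\mathbf A[X/i]=\mathbf A[X,X/i]$: $\phi$ is dinatural in its $i$-th variable if for all $A_j$ ($j\ne i$) and $f\colon A\to B$, $G(\mathbf A[A,f/i]\tau)\circ\phi_{\mathbf A[A/i]}\circ F(\mathbf A[f,A/i]\sigma)=G(\mathbf A[f,B/i]\tau)\circ\phi_{\mathbf A[B/i]}\circ F(\mathbf A[B,f/i]\sigma)$. Setting: $F_u\colon\mathbb B^{\alpha^u}\to\mathbb C$ ($u=1,2,3$), $\phi$ of type $|\alpha^1|\xrightarrow{\sigma_1}k_1\xleftarrow{\tau_1}|\alpha^2|$, $\psi$ of type $|\alpha^2|\xrightarrow{\sigma_2}k_2\xleftarrow{\tau_2}|\alpha^3|$. The composite graph $\Gamma(\psi)\circ\Gamma(\phi)$ has places $P=|\alpha^1|\sqcup|\alpha^2|\sqcup|\alpha^3|$ (write $\iota_u(j)$ for place $j$ of block $u$) and transitions $T=k_1\sqcup k_2$ (write $\kappa_u(t)$ for $t\in k_u$); for $u\in\{1,2\}$: ${}^\bullet\kappa_u(t)=\{\iota_u(p):\sigma_u p=t,\alpha^u_p=+\}\cup\{\iota_{u+1}(p):\tau_u p=t,\alpha^{u+1}_p=-\}$ and $\kappa_u(t)^\bullet=\{\iota_u(p):\sigma_u p=t,\alpha^u_p=-\}\cup\{\iota_{u+1}(p):\tau_u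 p=t,\alpha^{u+1}_p=+\}$. For a place $p$, ${}^\bullet p$ and $p^\bullet$ are the sets of transitions having $p$ as output, resp. input; each has at most one element, and $p$ is adjacent to at least one transition. Labelled marking: a triple $(M,L,f)$ with $f\colon A\to B$ in $\mathbb B$, $M\colon P\to\{0,1\}$, $L\colon T\to\{A,B\}$ such that for every place $p$: if $M(p)=1$ then $L(s)=A$ for $s\in{}^\bullet p$ and $L(s)=B$ for $s\in p^\bullet$; if $M(p)=0$ then all transitions in ${}^\bullet p\cup p^\bullet$ have the same label. Associated morphism: $\mathrm{mor}(M,L,f)=F_3(x^3_1,\dots,x^3_{|\alpha^3|})\circ\psi_{X^2_1,\dots,X^2_{k_2}}\circ F_2(x^2_1,\dots,x^2_{|\alpha^2|})\circ\phi_{X^1_1,\dots,X^1_{k_1}}\circ F_1(x^1_1,\dots,x^1_{|\alpha^1|})$ in $\mathbb C$, where $x^u_j=f$ if $M(\iota_u(j))=1$ and $x^u_j=1_{L(s)}$ for $s$ any transition adjacent to $\iota_u(j)$ if $M(\iota_u(j))=0$, and $X^u_j=L(\kappa_u(j))$. *)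

From mathcomp Require Import all_boot.
Set Implicit Arguments. Unset Strict Implicit. Unset Printing Implicit Defensive.

(* Categories, presented "arrows-only": one type of all morphisms with  *)
(* domain/codomain maps; composition is a total operation whose laws    *)
(* are only required on composable pairs. [cmp g f] is g o f.           *)
Record Cat := {
  ob : Type;
  mor : Type;
  dom : mor -> ob;
  cod : mor -> ob;
  idm : ob -> mor;
  cmp : mor -> mor -> mor;
  dom_idm : forall a, dom (idm a) = a;
  cod_idm : forall a, cod (idm a) = a;
  dom_cmp : forall f g, cod f = dom g -> dom (cmp g f) = dom f;
  cod_cmp : forall f g, cod f = dom g -> cod (cmp g f) = cod g;
  cmp_idr : forall f, cmp f (idm (dom f)) = f;
  cmp_idl : forall f, cmp (idm (cod f)) f = f;
  cmp_assoc : forall f g h, cod f = dom g -> cod g = dom h ->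
    cmp h (cmp g f) = cmp (cmp h g) f
}.

(* Functor B^alpha -> C, alpha : 'I_n -> bool (true = +, false = -).
   A tuple of B-morphisms fs is regarded as a morphism of B^alpha: in a
   contravariant entry j, fs j : X -> Y in B is the arrow Y -> X of B^op. *)
Record mfunctor (B C : Cat) (n : nat) (alpha : 'I_n -> bool) := {
  fo : ('I_n -> ob B) -> ob C;
  fm : ('I_n -> mor B) -> mor C;
  fm_dom : forall fs,
    dom (fm fs) = fo (fun j => if alpha j then dom (fs j) else cod (fs j));
  fm_cod : forall fs,
    cod (fm fs) = fo (fun j => if alpha j then cod (fs j) else dom (fs j));
  fm_id : forall A : 'I_n -> ob B, fm (fun j => idm (A j)) = idm (fo A);
  fm_cmp : forall fs gs : 'I_n -> mor B,
    (forall j, if alpha j then cod (fs j) = dom (gs j)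
               else dom (fs j) = cod (gs j)) ->
    fm (fun j => if alpha j then cmp (gs j) (fs j) else cmp (fs j) (gs j))
    = cmp (fm gs) (fm fs)
}.

Record transf (B C : Cat) (n m k : nat) (alpha : 'I_n -> bool)
    (beta : 'I_m -> bool) (F : mfunctor B C alpha) (G : mfunctor B C beta)
    (sigma : 'I_n -> 'I_k) (tau : 'I_m -> 'I_k) := {
  tcomp :> ('I_k -> ob B) -> mor C;
  tcomp_dom : forall A, dom (tcomp A) = fo F (fun j => A (sigma j));
  tcomp_cod : forall A, cod (tcomp A) = fo G (fun j => A (tau j))
}.

Section Dinat.
Variables (B C : Cat) (n m k : nat) (alpha : 'I_n -> bool)
  (beta : 'I_m -> bool) (F : mfunctor B C alpha) (G : mfunctor B C beta)
  (sigma : 'I_n -> 'I_k) (tau : 'I_m -> 'I_k).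

(* A[X,Y/i]sigma as a tuple of morphisms (X,Y morphisms of B; an object
   Z in this position stands for idm Z). *)
Definition subst_mor (p : nat) (gamma : 'I_p -> bool) (rho : 'I_p -> 'I_k)
  (A : 'I_k -> ob B) (i : 'I_k) (X Y : mor B) : 'I_p -> mor B :=
  fun j => if rho j == i then (if gamma j then Y else X) else idm (A (rho j)).

Definition subst_ob (A : 'I_k -> ob B) (i : 'I_k) (X : ob B) : 'I_k -> ob B :=
  fun l => if l == i then X else A l.

Definition dinatural (phi : transf F G sigma tau) (i : 'I_k) : Prop :=
  forall (A : 'I_k -> ob B) (f : mor B),
    cmp (fm G (subst_mor beta tau A i (idm (dom f)) f))
      (cmp (phi (subst_ob A i (dom f)))
           (fm F (subst_mor alpha sigma A i f (idm (dom f)))))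
  = cmp (fm G (subst_mor beta tau A i f (idm (cod f))))
      (cmp (phi (subst_ob A i (cod f)))
           (fm F (subst_mor alpha sigma A i (idm (cod f)) f))).
End Dinat.

(* Places: inl j = iota_1 j, inr (inl j) = iota_2 j, inr (inr j) = iota_3 j. *)
(* Transitions: inl t = kappa_1 t, inr t = kappa_2 t.                    *)
Definition place (n1 n2 n3 : nat) := ('I_n1 + ('I_n2 + 'I_n3))%type.
Definition transition (k1 k2 : nat) := ('I_k1 + 'I_k2)%type.

Inductive lab := LA | LB.

Section Graph.
Variables (n1 n2 n3 k1 k2 : nat)
  (a1 : 'I_n1 -> bool) (a2 : 'I_n2 -> bool) (a3 : 'I_n3 -> bool)
  (s1 : 'I_n1 -> 'I_k1) (t1 : 'I_n2 -> 'I_k1)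
  (s2 : 'I_n2 -> 'I_k2) (t2 : 'I_n3 -> 'I_k2).

Definition is_input (p : place n1 n2 n3) (t : transition k1 k2) : bool :=
  match t, p with
  | inl t, inl j => (s1 j == t) && a1 j
  | inl t, inr (inl j) => (t1 j == t) && ~~ a2 j
  | inr t, inr (inl j) => (s2 j == t) && a2 j
  | inr t, inr (inr j) => (t2 j == t) && ~~ a3 j
  | _, _ => false
  end.

Definition is_output (p : place n1 n2 n3) (t : transition k1 k2) : bool :=
  match t, p with
  | inl t, inl j => (s1 j == t) && ~~ a1 j
  | inl t, inr (inl j) => (t1 j == t) && a2 j
  | inr t, inr (inl j) => (s2 j == t) && ~~ a2 j
  | inr t, inr (inr j) => (t2 j == t) && a3 j
  | _, _ => false
  end.

(* {}^\bullet p = [set s | is_output p s],  p^\bullet = [set s | is_input p s].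
   M p = true means M(p) = 1. *)
Definition labelled_marking (M : place n1 n2 n3 -> bool)
    (L : transition k1 k2 -> lab) : Prop :=
  forall p,
    if M p then
      (forall s, is_output p s -> L s = LA) /\
      (forall s, is_input p s -> L s = LB)
    else
      forall s s', is_input p s || is_output p s ->
                   is_input p s' || is_output p s' -> L s = L s'.

Definition fire_marking (M : place n1 n2 n3 -> bool) (t : transition k1 k2)
    : place n1 n2 n3 -> bool :=
  fun p => if is_input p t then false else if is_output p t then true else M p.

Definition fire_label (L : transition k1 k2 -> lab) (t : transition k1 k2)
    : transition k1 k2 -> lab :=
  fun s => if s == t then LA else L s.

Section Mor.
Variables (B C : Cat)
  (F1 : mfunctor B C a1) (F2 : mfunctor B C a2) (F3 : mfunctor B C a3)
  (phi : transf F1 F2 s1 t1) (psi : transf F2 F3 s2 t2).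

Definition labobj (f : mor B) (l : lab) : ob B :=
  match l with LA => dom f | LB => cod f end.

Definition mor_of (M : place n1 n2 n3 -> bool) (L : transition k1 k2 -> lab)
    (f : mor B) : mor C :=
  let x1 := fun j : 'I_n1 =>
    if M (inl j) then f else idm (labobj f (L (inl (s1 j)))) in
  let x2 := fun j : 'I_n2 =>
    if M (inr (inl j)) then f else idm (labobj f (L (inl (t1 j)))) in
  let x3 := fun j : 'I_n3 =>
    if M (inr (inr j)) then f else idm (labobj f (L (inr (t2 j)))) in
  let X1 := fun i : 'I_k1 => labobj f (L (inl i)) in
  let X2 := fun i : 'I_k2 => labobj f (L (inr i)) in
  cmp (fm F3 x3) (cmp (psi X2) (cmp (fm F2 x2) (cmp (phi X1) (fm F1 x1)))).
End Mor.
End Graph.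

From mathcomp Require Import all_boot.
From Stdlib Require Import FunctionalExtensionality.
Set Implicit Arguments. Unset Strict Implicit. Unset Printing Implicit Defensive.

(* On the categorical side, a tuple of morphisms of B is read as a
   morphism of B^alpha (variance-aware domain, codomain and composition
   [vdom], [vcod], [vcmp]), and we prove a "sliding" form of dinaturality
   ([dinatural_slide]): in a composite G(y) o theta_A o F(x) in which the
   variable i carries f : A_i -> B_i, f may be moved from the places before
   theta to the places after it, turning A_i = cod f into dom f.  It follows
   from the dinaturality hexagon by factoring F(x) and G(y) through the
   tuples of the hexagon ([fm_factor_hexagon_right], [fm_factor_hexagon_left]).  The theorem
   follows by applying [dinatural_slide] to phi or to psi, according to the
   block of the fired transition. *)

(* Substituting such
   factorizations into y o T o x and reassociating isolates the middle part
   g2 o T o g1, to which the dinaturality hexagon applies. *)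
Section Factors.
Variable C : Cat.

Definition factors (h g w : mor C) : Prop := cod w = dom g /\ h = cmp g w.

Lemma factors_sandwich (x g1 w1 y w2 g2 T : mor C) :
  factors x g1 w1 -> factors y w2 g2 -> cod g1 = dom T -> cod T = dom g2 ->
  cmp y (cmp T x) = cmp w2 (cmp (cmp g2 (cmp T g1)) w1).
Proof.
move=> [w1g1 ->] [g2w2 ->] g1T Tg2.
rewrite -cmp_assoc //; last by rewrite cod_cmp // cod_cmp.
rewrite (cmp_assoc w1g1) //.
rewrite (@cmp_assoc _ w1 (cmp T g1) g2) //; first by rewrite dom_cmp.
by rewrite cod_cmp.
Qed.
End Factors.

(* Variance-aware structure: a morphism g of B seen in B (b = true) or in
   B^op (b = false). *)
Section Variance.
Variable B : Cat.

Definition vdom (b : bool) (g : mor B) : ob B := if b then dom g else cod g.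
Definition vcod (b : bool) (g : mor B) : ob B := if b then cod g else dom g.
Definition vcmp (b : bool) (g h : mor B) : mor B := if b then cmp g h else cmp h g.

Lemma vdom_idm b (a : ob B) : vdom b (idm a) = a.
Proof. by case: b; rewrite /vdom ?dom_idm ?cod_idm. Qed.

Lemma vcod_idm b (a : ob B) : vcod b (idm a) = a.
Proof. by case: b; rewrite /vcod ?dom_idm ?cod_idm. Qed.

Lemma vdomE b (g : mor B) : vdom b g = vcod (~~ b) g.
Proof. by case: b. Qed.

Lemma vcmp_idl b (h : mor B) : vcmp b (idm (vcod b h)) h = h.
Proof. by case: b; rewrite /vcmp /vcod ?cmp_idl ?cmp_idr. Qed.

Lemma vcmp_idr b (h : mor B) : vcmp b h (idm (vdom b h)) = h.
Proof. by case: b; rewrite /vcmp /vdom ?cmp_idl ?cmp_idr. Qed.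
End Variance.

Section FunctorFactor.
Variables (B C : Cat) (p k : nat) (gam : 'I_p -> bool) (H : mfunctor B C gam)
  (rho : 'I_p -> 'I_k) (i : 'I_k).

Lemma fm_composable (w g : 'I_p -> mor B) :
  (forall j, vcod (gam j) (w j) = vdom (gam j) (g j)) ->
  cod (fm H w) = dom (fm H g).
Proof. by move=> wg; rewrite fm_cod fm_dom; congr fo; apply: functional_extensionality. Qed.

Lemma fm_factors (w g : 'I_p -> mor B) :
  (forall j, vcod (gam j) (w j) = vdom (gam j) (g j)) ->
  factors (fm H (fun j => vcmp (gam j) (g j) (w j))) (fm H g) (fm H w).
Proof.
move=> wg; split; first exact: fm_composable.
rewrite -fm_cmp // => j; move: (wg j); by rewrite /vcod /vdom; case: (gam j).
Qed.

Lemma fm_factor_right (O : 'I_p -> ob B) (x g : 'I_p -> mor B) :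
  (forall j, rho j != i -> g j = idm (vcod (gam j) (x j))) ->
  (forall j, rho j = i -> x j = g j /\ vdom (gam j) (g j) = O j) ->
  factors (fm H x) (fm H g)
    (fm H (fun j => if rho j == i then idm (O j) else x j)).
Proof.
move=> g_off x_at; set w := fun j => _.
have -> : x = fun j => vcmp (gam j) (g j) (w j).
  apply: functional_extensionality => j; rewrite /w.
  case: eqP => [/x_at[-> <-]|/eqP/g_off ->]; by rewrite ?vcmp_idr ?vcmp_idl.
apply: fm_factors => j; rewrite /w.
case: eqP => [/x_at[_ <-]|/eqP/g_off ->]; by rewrite ?vcod_idm ?vdom_idm.
Qed.

Lemma fm_factor_left (O : 'I_p -> ob B) (y g : 'I_p -> mor B) :
  (forall j, rho j != i -> g j = idm (vdom (gam j) (y j))) ->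
  (forall j, rho j = i -> y j = g j /\ vcod (gam j) (g j) = O j) ->
  factors (fm H y)
    (fm H (fun j => if rho j == i then idm (O j) else y j)) (fm H g).
Proof.
move=> g_off y_at; set w := fun j => _.
have -> : y = fun j => vcmp (gam j) (w j) (g j).
  apply: functional_extensionality => j; rewrite /w.
  case: eqP => [/y_at[-> <-]|/eqP/g_off ->]; by rewrite ?vcmp_idr ?vcmp_idl.
apply: fm_factors => j; rewrite /w.
case: eqP => [/y_at[_ <-]|/eqP/g_off ->]; by rewrite ?vcod_idm ?vdom_idm.
Qed.

Lemma fm_factor_hexagon_right (A : 'I_k -> ob B) (f : mor B) (x x' : 'I_p -> mor B) :
  (forall j, vcod (gam j) (x j) = A (rho j)) ->
  (forall j, rho j != i -> x' j = x j) ->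
  (forall j, rho j = i -> x j = (if gam j then f else idm (cod f)) /\
                          x' j = (if gam j then idm (dom f) else f)) ->
  let w := fm H (fun j => if rho j == i then idm (if gam j then dom f else cod f)
                          else x j) in
  factors (fm H x) (fm H (subst_mor gam rho A i (idm (cod f)) f)) w /\
  factors (fm H x') (fm H (subst_mor gam rho A i f (idm (dom f)))) w.
Proof.
move=> xA x'_off x_at w; split.
  apply: fm_factor_right => j; first by move=> ne; rewrite /subst_mor (negbTE ne) xA.
  move=> ji; have [-> _] := x_at j ji; rewrite /subst_mor ji eqxx.
  by case: (gam j); rewrite /vdom ?cod_idm.
have -> : w = fm H (fun j => if rho j == i then idm (if gam j then dom f else cod f)
                             else x' j).
  by congr fm; apply: functional_extensionality => j; case: eqP => // /eqP/x'_off ->.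
apply: fm_factor_right => j; first by move=> ne; rewrite /subst_mor (negbTE ne) x'_off // xA.
move=> ji; have [_ ->] := x_at j ji; rewrite /subst_mor ji eqxx.
by case: (gam j); rewrite /vdom ?dom_idm.
Qed.

Lemma fm_factor_hexagon_left (A : 'I_k -> ob B) (f : mor B) (y y' : 'I_p -> mor B) :
  (forall j, vdom (gam j) (y j) = A (rho j)) ->
  (forall j, rho j != i -> y' j = y j) ->
  (forall j, rho j = i -> y j = (if gam j then idm (cod f) else f) /\
                          y' j = (if gam j then f else idm (dom f))) ->
  let w := fm H (fun j => if rho j == i then idm (if gam j then cod f else dom f)
                          else y j) in
  factors (fm H y) w (fm H (subst_mor gam rho A i f (idm (cod f)))) /\
  factors (fm H y') w (fm H (subst_mor gam rho A i (idm (dom f)) f)).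
Proof.
move=> yA y'_off y_at w; split.
  apply: fm_factor_left => j; first by move=> ne; rewrite /subst_mor (negbTE ne) yA.
  move=> ji; have [-> _] := y_at j ji; rewrite /subst_mor ji eqxx.
  by case: (gam j); rewrite /vcod ?cod_idm.
have -> : w = fm H (fun j => if rho j == i then idm (if gam j then cod f else dom f)
                             else y' j).
  by congr fm; apply: functional_extensionality => j; case: eqP => // /eqP/y'_off ->.
apply: fm_factor_left => j; first by move=> ne; rewrite /subst_mor (negbTE ne) y'_off // yA.
move=> ji; have [_ ->] := y_at j ji; rewrite /subst_mor ji eqxx.
by case: (gam j); rewrite /vcod ?dom_idm.
Qed.

Lemma vcod_subst_mor (A A' : 'I_k -> ob B) (X Y : mor B) :
  dom X = A' i -> cod Y = A' i -> (forall l, l != i -> A l = A' l) ->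
  forall j, vcod (gam j) (subst_mor gam rho A i X Y j) = A' (rho j).
Proof.
move=> X_i Y_i A_off j; rewrite /subst_mor.
case: eqP => [->|/eqP ne]; last by rewrite vcod_idm A_off.
by case: (gam j).
Qed.

Lemma vdom_subst_mor (A A' : 'I_k -> ob B) (X Y : mor B) :
  cod X = A' i -> dom Y = A' i -> (forall l, l != i -> A l = A' l) ->
  forall j, vdom (gam j) (subst_mor gam rho A i X Y j) = A' (rho j).
Proof.
move=> X_i Y_i A_off j; rewrite /subst_mor.
case: eqP => [->|/eqP ne]; last by rewrite vdom_idm A_off.
by case: (gam j).
Qed.
End FunctorFactor.

Section Sliding.
Variables (B C : Cat) (n m k : nat) (alpha : 'I_n -> bool)
  (beta : 'I_m -> bool) (F : mfunctor B C alpha) (G : mfunctor B C beta)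
  (sigma : 'I_n -> 'I_k) (tau : 'I_m -> 'I_k) (th : transf F G sigma tau).

Lemma fm_cod_tcomp_dom (A : 'I_k -> ob B) (x : 'I_n -> mor B) :
  (forall j, vcod (alpha j) (x j) = A (sigma j)) -> cod (fm F x) = dom (th A).
Proof. by move=> xA; rewrite fm_cod tcomp_dom; congr fo; apply: functional_extensionality. Qed.

Lemma tcomp_cod_fm_dom (A : 'I_k -> ob B) (y : 'I_m -> mor B) :
  (forall j, vdom (beta j) (y j) = A (tau j)) -> cod (th A) = dom (fm G y).
Proof.
by move=> yA; rewrite fm_dom tcomp_cod; congr fo; apply: functional_extensionality => j; exact/esym/yA.
Qed.

Lemma dinatural_slide i (th_i : dinatural th i) (A : 'I_k -> ob B) (f : mor B)
    (x x' : 'I_n -> mor B) (y y' : 'I_m -> mor B) :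
  A i = cod f ->
  (forall j, vcod (alpha j) (x j) = A (sigma j)) ->
  (forall j, vdom (beta j) (y j) = A (tau j)) ->
  (forall j, sigma j != i -> x' j = x j) ->
  (forall j, tau j != i -> y' j = y j) ->
  (forall j, sigma j = i -> x j = (if alpha j then f else idm (cod f)) /\
                            x' j = (if alpha j then idm (dom f) else f)) ->
  (forall j, tau j = i -> y j = (if beta j then idm (cod f) else f) /\
                          y' j = (if beta j then f else idm (dom f))) ->
  cmp (fm G y) (cmp (th A) (fm F x))
  = cmp (fm G y') (cmp (th (subst_ob A i (dom f))) (fm F x')).
Proof.
move=> Ai xA yA x'_off y'_off x_at y_at.
have [fac_x fac_x'] := fm_factor_hexagon_right F xA x'_off x_at.
have [fac_y fac_y'] := fm_factor_hexagon_left G yA y'_off y_at.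
set A' := subst_ob A i (dom f).
have A'i : A' i = dom f by rewrite /A' /subst_ob eqxx.
have A'_off l : l != i -> A l = A' l by rewrite /A' /subst_ob => /negbTE ->.
have EA : subst_ob A i (cod f) = A.
  by apply: functional_extensionality => l; rewrite /subst_ob; case: eqP => // ->.
rewrite (factors_sandwich fac_x fac_y) ?(factors_sandwich fac_x' fac_y').
- by have := th_i A f; rewrite EA => ->.
(* The remaining goals: the factors of the hexagon are composable. *)
all: first [apply: tcomp_cod_fm_dom; apply: vdom_subst_mor
           | apply: fm_cod_tcomp_dom; apply: vcod_subst_mor].
all: by rewrite ?dom_idm ?cod_idm ?Ai ?A'i.
Qed.
End Sliding.

Section Net.
Variables (n1 n2 n3 k1 k2 : nat)
  (a1 : 'I_n1 -> bool) (a2 : 'I_n2 -> bool) (a3 : 'I_n3 -> bool)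
  (s1 : 'I_n1 -> 'I_k1) (t1 : 'I_n2 -> 'I_k1)
  (s2 : 'I_n2 -> 'I_k2) (t2 : 'I_n3 -> 'I_k2).

Local Notation is_input := (is_input a1 a2 a3 s1 t1 s2 t2).
Local Notation is_output := (is_output a1 a2 a3 s1 t1 s2 t2).
Local Notation labelled_marking := (labelled_marking a1 a2 a3 s1 t1 s2 t2).
Local Notation fire_marking := (fire_marking a1 a2 a3 s1 t1 s2 t2).

Definition adjacent (p : place n1 n2 n3) (s : transition k1 k2) : bool :=
  is_input p s || is_output p s.

Lemma input_uniq p s s' : is_input p s -> is_input p s' -> s = s'.
Proof.
case: p => [j|[j|j]]; case: s => s; case: s' => s'; rewrite /is_input //=;
move=> /andP[/eqP <- h1] /andP[/eqP <- h2] //; by move: h1 h2; case: (a2 j).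
Qed.

Lemma output_uniq p s s' : is_output p s -> is_output p s' -> s = s'.
Proof.
case: p => [j|[j|j]]; case: s => s; case: s' => s'; rewrite /is_output //=;
move=> /andP[/eqP <- h1] /andP[/eqP <- h2] //; by move: h1 h2; case: (a2 j).
Qed.

Section Firing.
Variables (M : place n1 n2 n3 -> bool) (L : transition k1 k2 -> lab)
  (t : transition k1 k2).
Hypotheses (ML : labelled_marking M L)
  (t_enabled : forall p, is_input p t -> M p = true) (Lt : L t = LB).

(* The output places of t are unmarked, since t is labelled B. *)
Lemma enabled_output_unmarked p : is_output p t -> M p = false.
Proof. by move=> pt; have := ML p; case: (M p) => // [[/(_ t pt)]]; rewrite Lt. Qed.

Lemma label_around_output p s : is_output p t -> adjacent p s -> L s = LB.
Proof.
move=> pt ps; have := ML p; rewrite (enabled_output_unmarked pt) => /(_ s t ps).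
by rewrite /adjacent pt orbT Lt => ->.
Qed.

Lemma fire_label_input p s : is_input p t -> adjacent p s -> fire_label L t s = LA.
Proof.
move=> pt /orP[ps|ps]; rewrite /fire_label; case: eqP => // ne.
  by case: ne; exact: input_uniq ps pt.
by have := ML p; rewrite t_enabled // => -[/(_ s ps)].
Qed.

Lemma fire_labelled_marking : labelled_marking (fire_marking M t) (fire_label L t).
Proof.
move=> p; rewrite /fire_marking.
case pt_in: (is_input p t).
  by move=> s s' ps ps'; rewrite !(fire_label_input pt_in).
case pt_out: (is_output p t).
  split=> s ps; rewrite /fire_label; case: eqP => [st|ne].
  - by [].
  - by case: ne; exact: output_uniq ps pt_out.
  - by move: ps; rewrite st pt_in.
  - by apply: label_around_output pt_out _; rewrite /adjacent ps.
have unfired s : adjacent p s -> fire_label L t s = L s.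
  by rewrite /fire_label /adjacent; case: eqP => // ->; rewrite pt_in pt_out.
have := ML p; case: (M p) => [[out_A in_B]|same].
  split=> s ps; rewrite unfired /adjacent ?ps ?orbT //.
    exact: out_A.
  exact: in_B.
by move=> s s' ps ps'; rewrite !unfired //; exact: same.
Qed.
End Firing.

Section MarkingMorphism.
Variables (B C : Cat)
  (F1 : mfunctor B C a1) (F2 : mfunctor B C a2) (F3 : mfunctor B C a3)
  (phi : transf F1 F2 s1 t1) (psi : transf F2 F3 s2 t2) (f : mor B).

Definition place_mor (M : place n1 n2 n3 -> bool) (L : transition k1 k2 -> lab)
    (p : place n1 n2 n3) (s : transition k1 k2) : mor B :=
  if M p then f else idm (labobj f (L s)).

Definition F1_arg M L : 'I_n1 -> mor B := fun j => place_mor M L (inl j) (inl (s1 j)).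
Definition F2_arg M L : 'I_n2 -> mor B := fun j => place_mor M L (inr (inl j)) (inl (t1 j)).
Definition F3_arg M L : 'I_n3 -> mor B := fun j => place_mor M L (inr (inr j)) (inr (t2 j)).
Definition phi_arg (L : transition k1 k2 -> lab) : 'I_k1 -> ob B :=
  fun i => labobj f (L (inl i)).
Definition psi_arg (L : transition k1 k2 -> lab) : 'I_k2 -> ob B :=
  fun i => labobj f (L (inr i)).

Lemma mor_ofE M L : mor_of phi psi M L f =
  cmp (fm F3 (F3_arg M L)) (cmp (psi (psi_arg L))
    (cmp (fm F2 (F2_arg M L)) (cmp (phi (phi_arg L)) (fm F1 (F1_arg M L))))).
Proof. by []. Qed.

(* In a labelled marking the five factors of mor(M, L, f) are composable. *)
Section WellTyped.
Variables (M : place n1 n2 n3 -> bool) (L : transition k1 k2 -> lab).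
Hypothesis ML : labelled_marking M L.

Lemma vcod_place_mor b p s s' :
  (if b then is_input p s else is_output p s) -> adjacent p s' ->
  vcod b (place_mor M L p s') = labobj f (L s).
Proof.
rewrite /place_mor; have := ML p; case: (M p) => [[out_A in_B]|same] ps ps'.
  by case: b ps => ps; rewrite /vcod; [rewrite in_B | rewrite out_A].
rewrite vcod_idm; congr labobj; apply: same => //.
by case: b ps => ->; rewrite ?orbT.
Qed.

Lemma vdom_place_mor b p s s' :
  (if b then is_output p s else is_input p s) -> adjacent p s' ->
  vdom b (place_mor M L p s') = labobj f (L s).
Proof. by rewrite vdomE => ps; apply: vcod_place_mor; case: b ps. Qed.

Lemma F1_arg_cod j : vcod (a1 j) (F1_arg M L j) = phi_arg L (s1 j).
Proof. by apply: vcod_place_mor; rewrite /adjacent /is_input /is_output eqxx; case: (a1 j). Qed.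

Lemma F2_arg_dom j : vdom (a2 j) (F2_arg M L j) = phi_arg L (t1 j).
Proof. by apply: vdom_place_mor; rewrite /adjacent /is_input /is_output eqxx; case: (a2 j). Qed.

Lemma F2_arg_cod j : vcod (a2 j) (F2_arg M L j) = psi_arg L (s2 j).
Proof. by apply: vcod_place_mor; rewrite /adjacent /is_input /is_output eqxx; case: (a2 j). Qed.

Lemma F3_arg_dom j : vdom (a3 j) (F3_arg M L j) = psi_arg L (t2 j).
Proof. by apply: vdom_place_mor; rewrite /adjacent /is_input /is_output eqxx; case: (a3 j). Qed.

Lemma mor_of_reassoc : mor_of phi psi M L f =
  cmp (cmp (fm F3 (F3_arg M L)) (cmp (psi (psi_arg L)) (fm F2 (F2_arg M L))))
      (cmp (phi (phi_arg L)) (fm F1 (F1_arg M L))).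
Proof.
have e1 := fm_cod_tcomp_dom phi F1_arg_cod.
have e2 := tcomp_cod_fm_dom phi F2_arg_dom.
have e3 := fm_cod_tcomp_dom psi F2_arg_cod.
have e4 := tcomp_cod_fm_dom psi F3_arg_dom.
have e12 : cod (cmp (phi (phi_arg L)) (fm F1 (F1_arg M L))) = dom (fm F2 (F2_arg M L)).
  by rewrite cod_cmp.
rewrite mor_ofE (cmp_assoc e12 e3) cmp_assoc //; first by rewrite dom_cmp.
by rewrite cod_cmp.
Qed.
End WellTyped.

Section FiringMorphism.
Variables (M : place n1 n2 n3 -> bool) (L : transition k1 k2 -> lab)
  (t : transition k1 k2).
Local Notation M' := (fire_marking M t).
Local Notation L' := (fire_label L t).

Lemma place_mor_fire_off p s :
  ~~ adjacent p t -> s != t -> place_mor M' L' p s = place_mor M L p s.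
Proof.
rewrite /adjacent negb_or => /andP[/negbTE pt_in /negbTE pt_out] /negbTE st.
by rewrite /place_mor /fire_marking /fire_label pt_in pt_out st.
Qed.

Hypotheses (ML : labelled_marking M L)
  (t_enabled : forall p, is_input p t -> M p = true) (Lt : L t = LB).

Lemma place_mor_fire b p s :
  (if b then is_input p t else is_output p t) -> adjacent p s ->
  place_mor M L p s = (if b then f else idm (cod f)) /\
  place_mor M' L' p s = (if b then idm (dom f) else f).
Proof.
rewrite /place_mor /fire_marking; case: b => pt ps.
  by rewrite t_enabled // pt (fire_label_input ML t_enabled pt ps).
have pt_unmarked := enabled_output_unmarked ML Lt pt.
have pt_in : is_input p t = false.
  by apply/negbTE/negP => /t_enabled; rewrite pt_unmarked.
by rewrite pt_unmarked pt_in pt (label_around_output ML Lt pt ps).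
Qed.
End FiringMorphism.

(* Firing a transition of the phi-block: dinaturality of phi in the variable
   i slides f across phi. *)
Lemma mor_of_fire_phi (phi_dinat : forall i, dinatural phi i) M L i :
  labelled_marking M L -> (forall p, is_input p (inl i) -> M p = true) ->
  L (inl i) = LB ->
  mor_of phi psi M L f
  = mor_of phi psi (fire_marking M (inl i)) (fire_label L (inl i)) f.
Proof.
move=> ML t_enabled Lt; rewrite !mor_ofE.
have -> : phi_arg (fire_label L (inl i)) = subst_ob (phi_arg L) i (dom f).
  apply: functional_extensionality => l; rewrite /phi_arg /fire_label /subst_ob.
  by have -> : (inl l == inl i :> transition k1 k2) = (l == i) by []; case: eqP.
congr (cmp _ (cmp _ _)); apply: (dinatural_slide (phi_dinat i)).
- by rewrite /phi_arg Lt.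
- exact: F1_arg_cod.
- exact: F2_arg_dom.
- move=> j ne; apply: place_mor_fire_off; last exact: ne.
  by rewrite /adjacent /is_input /is_output (negbTE ne).
- move=> j ne; apply: place_mor_fire_off; last exact: ne.
  by rewrite /adjacent /is_input /is_output (negbTE ne).
- move=> j ji; apply: (place_mor_fire ML t_enabled Lt).
  + by rewrite /is_input /is_output ji eqxx; case: (a1 j).
  + by rewrite /adjacent /is_input /is_output eqxx; case: (a1 j).
- move=> j ji; rewrite -[a2 j]negbK !(if_neg (~~ a2 j)).
  apply: (place_mor_fire ML t_enabled Lt).
  + by rewrite /is_input /is_output ji eqxx; case: (a2 j).
  + by rewrite /adjacent /is_input /is_output eqxx; case: (a2 j).
Qed.

(* Firing a transition of the psi-block: dinaturality of psi in the variable
   i slides f across psi. *)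
Lemma mor_of_fire_psi (psi_dinat : forall i, dinatural psi i) M L i :
  labelled_marking M L -> (forall p, is_input p (inr i) -> M p = true) ->
  L (inr i) = LB ->
  mor_of phi psi M L f
  = mor_of phi psi (fire_marking M (inr i)) (fire_label L (inr i)) f.
Proof.
move=> ML t_enabled Lt.
rewrite (mor_of_reassoc ML) (mor_of_reassoc (fire_labelled_marking ML t_enabled Lt)).
have -> : psi_arg (fire_label L (inr i)) = subst_ob (psi_arg L) i (dom f).
  apply: functional_extensionality => l; rewrite /psi_arg /fire_label /subst_ob.
  by have -> : (inr l == inr i :> transition k1 k2) = (l == i) by []; case: eqP.
congr (cmp _ _); apply: (dinatural_slide (psi_dinat i)).
- by rewrite /psi_arg Lt.
- exact: F2_arg_cod.
- exact: F3_arg_dom.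
- move=> j ne; apply: place_mor_fire_off => //.
  by rewrite /adjacent /is_input /is_output (negbTE ne).
- move=> j ne; apply: place_mor_fire_off; last exact: ne.
  by rewrite /adjacent /is_input /is_output (negbTE ne).
- move=> j ji; apply: (place_mor_fire ML t_enabled Lt).
  + by rewrite /is_input /is_output ji eqxx; case: (a2 j).
  + by rewrite /adjacent /is_input /is_output eqxx; case: (a2 j).
- move=> j ji; rewrite -[a3 j]negbK !(if_neg (~~ a3 j)).
  apply: (place_mor_fire ML t_enabled Lt).
  + by rewrite /is_input /is_output ji eqxx; case: (a3 j).
  + by rewrite /adjacent /is_input /is_output eqxx; case: (a3 j).
Qed.
End MarkingMorphism.
End Net.

Theorem mainTheorem7 (B C : Cat) (n1 n2 n3 k1 k2 : nat)
  (a1 : 'I_n1 -> bool) (a2 : 'I_n2 -> bool) (a3 : 'I_n3 -> bool)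
  (F1 : mfunctor B C a1) (F2 : mfunctor B C a2) (F3 : mfunctor B C a3)
  (s1 : 'I_n1 -> 'I_k1) (t1 : 'I_n2 -> 'I_k1)
  (s2 : 'I_n2 -> 'I_k2) (t2 : 'I_n3 -> 'I_k2)
  (phi : transf F1 F2 s1 t1) (psi : transf F2 F3 s2 t2)
  (Hphi : forall i, dinatural phi i) (Hpsi : forall i, dinatural psi i)
  (M : place n1 n2 n3 -> bool) (L : transition k1 k2 -> lab) (f : mor B)
  (HML : labelled_marking a1 a2 a3 s1 t1 s2 t2 M L)
  (t : transition k1 k2)
  (Hpre : forall p, is_input a1 a2 a3 s1 t1 s2 t2 p t -> M p = true)
  (Ht : L t = LB) :
  labelled_marking a1 a2 a3 s1 t1 s2 t2
    (fire_marking a1 a2 a3 s1 t1 s2 t2 M t) (fire_label L t) /\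
  mor_of phi psi M L f
  = mor_of phi psi (fire_marking a1 a2 a3 s1 t1 s2 t2 M t) (fire_label L t) f.
Proof.
split; first exact: fire_labelled_marking.
case: t Hpre Ht => i Hpre Ht; [exact: mor_of_fire_phi | exact: mor_of_fire_psi].
Qed.
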